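(* Suppose Assumption A2 (stated in the context) holds and let $\mathcal A_n^\dagger=\{\alpha>0:|\alpha/\alpha_0-1|\le n^{-2/\kappa}\}$. There exists an integer $N_2$ depending only on $\nu,d,\alpha_0,L,r_0,\kappa$ such that for all $n>N_2$ (and any distinct $S_n$), $$\sup_{\alpha\in\mathcal A_n^\dagger}\sum_{k=1}^n|\lambda_{k,n}(\alpha)-1|\le Ln^{-1},\qquad \sup_{\alpha\in\mathcal A_n^\dagger}\sum_{k=1}^n|\lambda_{k,n}(\alpha)-1|^2\le L^2n^{-3},$$ $$\sup_{\alpha\in\mathcal A_n^\dagger}\sum_{k=1}^n|\lambda_{k,n}(\alpha)^{-1}-1|\le 2Ln^{-1},\qquad \sup_{\alpha\in\mathcal A_n^\dagger}\sum_{k=1}^n|\lambda_{k,n}(\alpha)^{-1}-1|^2\le 4L^2n^{-3}.$$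
   Context: Fix $\theta_0,\alpha_0>0$. $K_{\alpha,\nu}:\mathbb R^d\to\mathbb R$ ($\alpha>0$) are positive definite functions, $S_n=\{\mathbf s_1,\dots,\mathbf s_n\}\subset[0,1]^d$ distinct points, $K_{\alpha,\nu}(S_n)=(K_{\alpha,\nu}(\mathbf s_i-\mathbf s_j))_{ij}$, and $\lambda_{1,n}(\alpha),\dots,\lambda_{n,n}(\alpha)$ are the eigenvalues of $K_{\alpha_0,\nu}(S_n)^{-1}K_{\alpha,\nu}(S_n)$. Spectral density: $f_{\theta,\alpha,\nu}(w)=(2\pi)^{-d}\int e^{-\imath w^Tx}\theta K_{\alpha,\nu}(x)dx$. Assumption A2: (i) there exist $L>0$, $r_0\in(0,1/2)$, $\kappa>0$ with $\sup_w|f_{\theta_0,\alpha,\nu}(w)/f_{\theta_0,\alpha_0,\nu}(w)-1|\le L|\alpha/\alpha_0-1|^\kappa$ whenever $|\alpha/\alpha_0-1|\le r_0$; (ii) $f_{\theta,\alpha,\nu}(w)$ is non-increasing in $\alpha$ for each $\theta,w$. *)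

From HB Require Import structures.
From mathcomp Require Import all_boot all_order all_algebra.
From mathcomp Require Import all_classical all_reals all_analysis.
Set Implicit Arguments. Unset Strict Implicit. Unset Printing Implicit Defensive.
Import Order.TTheory GRing.Theory Num.Theory.
Import numFieldNormedType.Exports.
Local Open Scope classical_set_scope.
Local Open Scope ring_scope.

(* Lebesgue measure on R^(n+1), built as the iterated product measure        *)
(*   R^(n+2) = R^(n+1) x R  (the second factor is sigma-finite).             *)
Fixpoint Rd (R : realType) (n : nat) : {dp : measure_display & measurableType dp} :=
  match n with
  | 0 => existT (fun dp => measurableType dp) _ (measurableTypeR R)
  | n'.+1 => existT (fun dp => measurableType dp) _
               (projT2 (Rd R n') * measurableTypeR R : measurableType _)%type
  end.

Fixpoint lebd (R : realType) (n : nat) : {measure set (projT2 (Rd R n)) -> \bar R} :=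
  match n return {measure set (projT2 (Rd R n)) -> \bar R} with
  | 0 => Measure.clone _ _ _ (@lebesgue_measure R) _
  | n'.+1 => Measure.clone _ _ _ (lebd R n' \x @lebesgue_measure R)%E _
  end.

Fixpoint coord (R : realType) (n : nat) : projT2 (Rd R n) -> nat -> R :=
  match n return projT2 (Rd R n) -> nat -> R with
  | 0 => fun x _ => x
  | n'.+1 => fun p i => if (i < n'.+1)%N then coord p.1 i else p.2
  end.

(* For d >= 1, the measure space (R^d, Lebesgue) is  Rdim R d  with  lebR R d,
   and  vec  identifies its points with row vectors 'rV[R]_d. *)
Definition Rdim (R : realType) (d : nat) := projT2 (Rd R d.-1).
Definition lebR (R : realType) (d : nat) : {measure set (Rdim R d) -> \bar R} :=
  lebd R d.-1.
Definition vec (R : realType) (d : nat) (x : Rdim R d) : 'rV[R]_d :=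
  \row_(i < d) coord x i.

Definition intRd (R : realType) (d : nat) (F : 'rV[R]_d -> R) : R :=
  Rintegral (lebR R d) setT (fun x => F (vec x)).
Definition integrableRd (R : realType) (d : nat) (F : 'rV[R]_d -> R) : Prop :=
  (lebR R d).-integrable setT (fun x => (F (vec x))%:E).

Definition dotv (R : realType) (d : nat) (w x : 'rV[R]_d) : R :=
  \sum_(i < d) w ord0 i * x ord0 i.

(* Spectral density  f_theta(w) = (2 pi)^(-d) \int e^{-i w^T x} theta K(x) dx.
   For a real, even (in particular positive definite) K the imaginary part
   -\int sin(w^T x) theta K(x) dx vanishes, so f_theta is the real integral below. *)
Definition spec_dens (R : realType) (d : nat) (theta : R) (K : 'rV[R]_d -> R)
    (w : 'rV[R]_d) : R :=
  ((2 * pi) ^- d) * intRd (fun x => cos (dotv w x) * (theta * K x)).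

Definition pos_def_fun (R : realType) (d : nat) (K : 'rV[R]_d -> R) : Prop :=
  (forall x, K (- x) = K x) /\
  forall (m : nat) (pts : 'I_m -> 'rV[R]_d), injective pts ->
    forall c : 'I_m -> R, (exists i, c i != 0) ->
      0 < \sum_(i < m) \sum_(j < m) c i * c j * K (pts i - pts j).

Definition cov_mx (R : realType) (d n : nat) (K : 'rV[R]_d -> R)
    (S : 'I_n -> 'rV[R]_d) : 'M[R]_n :=
  \matrix_(i < n, j < n) K (S i - S j).

From Pilot Require Import Defs.
From HB Require Import structures.
From mathcomp Require Import all_boot all_order all_algebra.
From mathcomp Require Import all_classical all_reals all_analysis.
From mathcomp Require Import ring lra.
Import Order.TTheory GRing.Theory Num.Theory.
Import numFieldNormedType.Exports.
Local Open Scope classical_set_scope.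
Local Open Scope ring_scope.
Set Implicit Arguments. Unset Strict Implicit. Unset Printing Implicit Defensive.

(* Proof idea: writing each covariance as the cosine transform of its spectral
   density, c^T K_alpha(S_n) c = \int |sum_i c_i e^{i w.s_i}|^2 f_alpha(w) dw.
   For alpha in A_n^dagger, A2 (i) bounds f_alpha / f_alpha0 - 1 pointwise by
   e := L n^-2 (theta0 cancels in the ratio), so the quadratic forms of
   K_alpha(S_n) and K_alpha0(S_n) are within a factor 1 -+ e of each other.
   Hence every eigenvalue of K_alpha0(S_n)^-1 K_alpha(S_n) lies within e of 1,
   its inverse within 2e of 1 (as e <= 1/2), and summing n such terms gives the
   four bounds. *)

Lemma measurable_coord (R : realType) (m i : nat) :
  measurable_fun setT (fun x : projT2 (Rd R m) => Defs.coord x i).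
Proof.
elim: m i => [|m IHm] i /=; first exact: measurable_id.
case: (i < m.+1)%N; last exact: measurable_snd.
exact: measurableT_comp (IHm i) measurable_fst.
Qed.

Section IntegralsOnRd.
Variables (R : realType) (d : nat).
Implicit Types (F G : 'rV[R]_d -> R) (v w x y : 'rV[R]_d).

Lemma dotvC v w : dotv v w = dotv w v.
Proof. by apply: eq_bigr => i _; rewrite mulrC. Qed.

Lemma dotvBr w x y : dotv w (x - y) = dotv w x - dotv w y.
Proof. by rewrite /dotv -sumrB; apply: eq_bigr => i _; rewrite !mxE mulrBr. Qed.

Lemma measurable_dotv v : measurable_fun setT (fun x : Rdim R d => dotv (vec x) v).
Proof.
apply: measurable_sum => i.
apply: (eq_measurable_fun (fun x : Rdim R d => Defs.coord x i * v ord0 i)).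
  by move=> x _; rewrite mxE.
by apply: measurable_realfun.measurable_funM => //; exact: measurable_coord.
Qed.

Lemma integrableRd_cosM F v :
  integrableRd F -> integrableRd (fun w => cos (dotv w v) * F w).
Proof.
move=> iF; have bounded_cos : [bounded cos (dotv (vec x) v) | x in [set: Rdim R d]].
  exists 1; split; first by rewrite num_real.
  by move=> M M1 x _; apply: le_trans (ltW M1); rewrite ler_norml cos_le1 cos_geN1.
have mcos : measurable_fun setT (fun x : Rdim R d => cos (dotv (vec x) v)).
  apply: (measurableT_comp _ (measurable_dotv v)).
  exact: measurable_realfun.continuous_measurable_fun (@continuous_cos R).
have := integrableMr measurableT mcos bounded_cos iF.
by apply: eq_integrable => // x _ /=; rewrite EFinM.
Qed.

Lemma integrableRdZ F a : integrableRd F -> integrableRd (fun w => a * F w).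
Proof.
move=> iF; have := integrableZl measurableT a iF.
by apply: eq_integrable => // x _ /=; rewrite EFinM.
Qed.

Lemma intRdZ F a : integrableRd F -> intRd (fun w => a * F w) = a * intRd F.
Proof. by move=> iF; rewrite /intRd RintegralZl. Qed.

Lemma integrableRd_sum (I : Type) (s : seq I) (G : I -> 'rV[R]_d -> R) :
  (forall i, integrableRd (G i)) -> integrableRd (fun w => \sum_(i <- s) G i w).
Proof.
move=> iG; elim: s => [|a s IHs].
  by apply: eq_integrable (integrable0 _ _) => // x _ /=; rewrite big_nil.
have := integrableD measurableT (iG a) IHs.
by apply: eq_integrable => // x _ /=; rewrite big_cons.
Qed.

Lemma intRd_sum (I : Type) (s : seq I) (G : I -> 'rV[R]_d -> R) :
  (forall i, integrableRd (G i)) ->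
  intRd (fun w => \sum_(i <- s) G i w) = \sum_(i <- s) intRd (G i).
Proof.
move=> iG; elim: s => [|a s IHs].
  rewrite big_nil /intRd (eq_Rintegral _ (g := cst 0)) => [|x _]; last by rewrite big_nil.
  by rewrite /Rintegral integral0.
rewrite big_cons -IHs /intRd -RintegralD //.
- by apply: eq_Rintegral => x _; rewrite big_cons.
- exact: iG.
- exact: integrableRd_sum.
Qed.

Lemma ler_intRd F G : integrableRd F -> integrableRd G ->
  (forall w, F w <= G w) -> intRd F <= intRd G.
Proof. by move=> iF iG FG; apply: le_Rintegral. Qed.

Definition cos_transform F x := intRd (fun w => cos (dotv w x) * F w).

Lemma spec_densZ (theta : R) F w :
  integrableRd F -> spec_dens theta F w = theta * spec_dens 1 F w.
Proof.
move=> iF; rewrite /spec_dens mulrCA; congr (_ * _).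
have iwF : integrableRd (fun x => cos (dotv w x) * (1 * F x)).
  by under eq_fun do rewrite mul1r dotvC; exact: integrableRd_cosM.
by rewrite -intRdZ //; apply: eq_Rintegral => x _; rewrite mul1r mulrCA.
Qed.

End IntegralsOnRd.

Definition qform (R : comPzRingType) (n : nat) (M : 'M[R]_n) (u : 'rV[R]_n) : R :=
  \sum_(i < n) \sum_(j < n) u ord0 i * u ord0 j * M i j.

Lemma qformE (R : comPzRingType) (n : nat) (M : 'M[R]_n) (u : 'rV[R]_n) :
  qform M u = \sum_(j < n) (u *m M) ord0 j * u ord0 j.
Proof.
rewrite /qform exchange_big; apply: eq_bigr => j _.
by rewrite mxE mulr_suml; apply: eq_bigr => i _; rewrite mulrAC.
Qed.

Section PositiveDefiniteQform.
Variables (R : realFieldType) (n : nat) (A : 'M[R]_n).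
Hypothesis qformA_gt0 : forall u : 'rV_n, u != 0 -> 0 < qform A u.

Lemma qform_gt0_unitmx : A \in unitmx.
Proof.
rewrite unitmxE unitfE; apply/negP => /det0P [v v_neq0 vA0].
have := qformA_gt0 v_neq0; rewrite qformE.
by under eq_bigr do rewrite vA0 mxE mul0r; rewrite big1 // ltxx.
Qed.

Lemma dist1_root_char_invmx_mul (B : 'M[R]_n) (e l : R) :
  (forall u, (1 - e) * qform A u <= qform B u <= (1 + e) * qform A u) ->
  root (char_poly (invmx A *m B)) l -> `|l - 1| <= e.
Proof.
move=> AB; rewrite -eigenvalue_root_char => /eigenvalueP [v vM v_neq0].
set u := v *m invmx A.
have uA : u *m A = v by rewrite /u -mulmxA mulVmx ?mulmx1 // qform_gt0_unitmx.
have u_neq0 : u != 0 by apply: contraNneq v_neq0 => u0; rewrite -uA u0 mul0mx.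
have qformB : qform B u = l * qform A u.
  rewrite !qformE mulr_sumr; apply: eq_bigr => j _.
  by rewrite uA /u -mulmxA vM mxE mulrA.
have qAu := qformA_gt0 u_neq0.
have /andP[lb ub] := AB u; rewrite qformB !(ler_pM2r qAu) in lb ub.
by rewrite ler_norml; apply/andP; split; lra.
Qed.

End PositiveDefiniteQform.

Lemma pos_def_fun_qform_gt0 (R : realType) (d n : nat) (K : 'rV[R]_d -> R)
    (S : 'I_n -> 'rV[R]_d) :
  pos_def_fun K -> injective S ->
  forall u : 'rV_n, u != 0 -> 0 < qform (cov_mx K S) u.
Proof.
move=> [_ Kpd] injS u u_neq0.
have [i ui] : exists i, u ord0 i != 0.
  apply/existsP; apply: contraNT u_neq0; rewrite negb_exists => /forallP u0.
  by apply/eqP/rowP => i; rewrite mxE; apply/eqP; rewrite -[_ == _]negbK u0.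
rewrite /qform; under eq_bigr do under eq_bigr do rewrite mxE.
exact: Kpd injS (fun i => u ord0 i) (ex_intro _ i ui).
Qed.

Section CosineTransformQform.
Variables (R : realType) (d n : nat) (S : 'I_n -> 'rV[R]_d) (c : 'rV[R]_n).
Implicit Types (F G : 'rV[R]_d -> R) (w : 'rV[R]_d).

Lemma qform_cos_ge0 w : 0 <= qform (cov_mx (fun x => cos (dotv w x)) S) c.
Proof.
(* the form equals |sum_i c_i exp(i w.s_i)|^2 *)
have -> : qform (cov_mx (fun x => cos (dotv w x)) S) c =
    (\sum_(i < n) c ord0 i * cos (dotv w (S i))) ^+ 2 +
    (\sum_(i < n) c ord0 i * sin (dotv w (S i))) ^+ 2.
  rewrite /qform !expr2 !mulr_suml -big_split /=; apply: eq_bigr => i _.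
  rewrite !mulr_sumr -big_split /=; apply: eq_bigr => j _.
  by rewrite mxE dotvBr cosB; ring.
by rewrite addr_ge0 // sqr_ge0.
Qed.

Lemma qform_cos_mulE F w :
  qform (cov_mx (fun x => cos (dotv w x)) S) c * F w =
  \sum_(i < n) \sum_(j < n) c ord0 i * c ord0 j * (cos (dotv w (S i - S j)) * F w).
Proof.
rewrite /qform mulr_suml; apply: eq_bigr => i _.
by rewrite mulr_suml; apply: eq_bigr => j _; rewrite mxE mulrA.
Qed.

Lemma integrableRd_qform_cosM F : integrableRd F ->
  integrableRd (fun w => qform (cov_mx (fun x => cos (dotv w x)) S) c * F w).
Proof.
move=> iF; under eq_fun do rewrite qform_cos_mulE.
do 2 apply: integrableRd_sum => ?.
exact/integrableRdZ/integrableRd_cosM.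
Qed.

Lemma qform_cos_transform F : integrableRd F ->
  qform (cov_mx (cos_transform F) S) c =
  intRd (fun w => qform (cov_mx (fun x => cos (dotv w x)) S) c * F w).
Proof.
move=> iF; under [in RHS]eq_fun do rewrite qform_cos_mulE.
have iFij i j : integrableRd (fun w =>
    c ord0 i * c ord0 j * (cos (dotv w (S i - S j)) * F w)).
  exact/integrableRdZ/integrableRd_cosM.
rewrite intRd_sum => [|i]; last exact: integrableRd_sum.
apply: eq_bigr => i _; rewrite intRd_sum //.
by apply: eq_bigr => j _; rewrite intRdZ ?mxE //; exact: integrableRd_cosM.
Qed.

Lemma ler_qform_cos_transform F G :
  integrableRd F -> integrableRd G -> (forall w, F w <= G w) ->
  qform (cov_mx (cos_transform F) S) c <= qform (cov_mx (cos_transform G) S) c.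
Proof.
move=> iF iG FG; rewrite !qform_cos_transform //.
apply: ler_intRd; try exact: integrableRd_qform_cosM.
by move=> w; rewrite ler_wpM2l ?qform_cos_ge0.
Qed.

Lemma qform_cos_transformZ F (a : R) : integrableRd F ->
  qform (cov_mx (cos_transform (fun w => a * F w)) S) c =
  a * qform (cov_mx (cos_transform F) S) c.
Proof.
move=> iF; rewrite !qform_cos_transform //; last exact: integrableRdZ.
rewrite -intRdZ; last exact: integrableRd_qform_cosM.
by apply: eq_Rintegral => w _; rewrite mulrCA.
Qed.

End CosineTransformQform.

Section NearOne.
Variable R : realFieldType.

Lemma ratio_dist1_sandwich (f0 f e : R) : 0 <= f0 -> e < 1 ->
  `|f / f0 - 1| <= e -> (1 - e) * f0 <= f <= (1 + e) * f0.
Proof.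
move=> f0_ge0 e_lt1; have [->|f0_neq0] := eqVneq f0 0.
  (* f / 0 = 0, so the hypothesis would read 1 <= e *)
  by rewrite invr0 mulr0 sub0r normrN normr1 => /(lt_le_trans e_lt1); rewrite ltxx.
have f0_gt0 : 0 < f0 by rewrite lt0r f0_neq0.
rewrite ler_norml => /andP[lb ub]; rewrite -(divfK f0_neq0 f) !ler_pM2r //.
by apply/andP; split; lra.
Qed.

Lemma dist1_inv_le (x e : R) : e <= 2^-1 -> `|x - 1| <= e -> `|x^-1 - 1| <= 2 * e.
Proof.
move=> e_half x_near1; have /andP[lb ub] : - e <= x - 1 <= e by rewrite -ler_norml.
have x_gt0 : 0 < x by lra.
have inv_le2 : x^-1 <= 2.
  by rewrite -[2]invrK lef_pV2 ?posrE ?invr_gt0 //; lra.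
have -> : x^-1 - 1 = x^-1 * (1 - x) by rewrite mulrBr mulr1 mulVf ?gt_eqF.
rewrite normrM gtr0_norm ?invr_gt0 // distrC.
by apply: ler_pM; rewrite ?invr_ge0 ?normr_ge0 ?(ltW x_gt0).
Qed.

Lemma sumr_le_const_mul (n : nat) (a : 'I_n -> R) (c : R) :
  (forall k, a k <= c) -> \sum_(k < n) a k <= c * n%:R.
Proof.
move=> a_le; apply: le_trans (ler_sum _ (fun k _ => a_le k)) _.
by rewrite sumr_const card_ord mulr_natr.
Qed.

Lemma sum_dist1_le (n : nat) (lambda : 'I_n -> R) (L : R) :
  (0 < n)%N -> L * (n%:R ^+ 2)^-1 <= 2^-1 ->
  (forall k, `|lambda k - 1| <= L * (n%:R ^+ 2)^-1) ->
    \sum_(k < n) `|lambda k - 1| <= L * n%:R^-1 /\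
    \sum_(k < n) `|lambda k - 1| ^+ 2 <= L ^+ 2 * (n%:R ^+ 3)^-1 /\
    \sum_(k < n) `|(lambda k)^-1 - 1| <= 2 * L * n%:R^-1 /\
    \sum_(k < n) `|(lambda k)^-1 - 1| ^+ 2 <= 4 * L ^+ 2 * (n%:R ^+ 3)^-1.
Proof.
set e := L * _ => n_gt0 e_half lambda_near1.
have n_neq0 : n%:R != 0 :> R by rewrite pnatr_eq0 -lt0n.
have sqr_le (x c : R) : `|x| <= c -> `|x| ^+ 2 <= c ^+ 2.
  by move=> xc; rewrite !expr2; apply: ler_pM.
have inv_near1 k := dist1_inv_le e_half (lambda_near1 k).
split; last split; last split.
- have -> : L * n%:R^-1 = e * n%:R by rewrite /e; field.
  exact: sumr_le_const_mul.
- have -> : L ^+ 2 * (n%:R ^+ 3)^-1 = e ^+ 2 * n%:R by rewrite /e; field.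
  by apply: sumr_le_const_mul => k; apply: sqr_le.
- have -> : 2 * L * n%:R^-1 = 2 * e * n%:R by rewrite /e; field.
  exact: sumr_le_const_mul.
- have -> : 4 * L ^+ 2 * (n%:R ^+ 3)^-1 = (2 * e) ^+ 2 * n%:R by rewrite /e; field.
  by apply: sumr_le_const_mul => k; apply: sqr_le.
Qed.

End NearOne.

Lemma powR_le_inv_sqr (R : realType) (a x kappa : R) :
  0 < kappa -> 0 <= a -> 0 < x -> a <= x `^ (- (2 / kappa)) ->
  a `^ kappa <= (x ^+ 2)^-1.
Proof.
move=> kappa_gt0 a_ge0 x_gt0 a_le.
have -> : (x ^+ 2)^-1 = (x `^ (- (2 / kappa))) `^ kappa.
  by rewrite -powRrM mulNr mulfVK ?gt_eqF // powRN -(powR_mulrn _ (ltW x_gt0)).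
by apply: ge0_ler_powR; rewrite ?nnegrE ?powR_ge0 // ltW.
Qed.

Lemma exists_large_nat (R : realType) (L r0 kappa : R) :
  0 < L -> 0 < r0 -> 0 < kappa ->
  exists N : nat, forall n : nat, (N < n)%N ->
    n%:R `^ (- (2 / kappa)) <= r0 /\ L * (n%:R ^+ 2)^-1 <= 2^-1.
Proof.
move=> L_gt0 r0_gt0 kappa_gt0; set A := r0^-1 `^ (kappa / 2).
exists (Num.truncn (A + 2 * L)) => n ltNn.
have nA : A + 2 * L < n%:R by apply: lt_le_trans (truncnS_gt _) _; rewrite ler_nat.
have A_ge0 : 0 <= A by apply: powR_ge0.
have n_gt0 : 0 < n%:R :> R by lra.
split.
  have -> : r0 = (A `^ (2 / kappa))^-1.
    rewrite /A -powRrM (_ : kappa / 2 * (2 / kappa) = 1) ?powRr1 ?invrK ?invr_ge0 ?ltW //.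
    by field; rewrite gt_eqF.
  have two_kappa_ge0 : 0 <= 2 / kappa by rewrite divr_ge0 // ltW.
  rewrite powRN lef_pV2 ?posrE ?powR_gt0 ?invr_gt0 //.
  by apply: ge0_ler_powR; rewrite ?nnegrE //; lra.
have n_le_sqr : n%:R <= n%:R ^+ 2 :> R by rewrite expr2 ler_peMr // ler1n -(ltr0n R).
by rewrite ler_pdivrMr ?exprn_gt0 //; lra.
Qed.

Theorem lemmaS4 (R : realType) (d : nat) (K : R -> R -> 'rV[R]_d -> R)
    (nu alpha0 L r0 kappa : R) :
  (0 < d)%N -> 0 < alpha0 ->
  (* standing assumptions on the covariance family K_{alpha,nu}, alpha > 0 *)
  (forall alpha, 0 < alpha -> pos_def_fun (K alpha nu)) ->
  (forall alpha, 0 < alpha -> integrableRd (K alpha nu)) ->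
  (forall alpha, 0 < alpha -> integrableRd (spec_dens 1 (K alpha nu))) ->
  (forall alpha, 0 < alpha -> forall w, 0 <= spec_dens 1 (K alpha nu) w) ->
  (forall alpha, 0 < alpha -> forall x,
     K alpha nu x = intRd (fun w => cos (dotv w x) * spec_dens 1 (K alpha nu) w)) ->
  (* constants of Assumption A2 *)
  0 < L -> 0 < r0 < 2^-1 -> 0 < kappa ->
  exists N2 : nat,
  forall theta0 : R, 0 < theta0 ->
  (* Assumption A2 (i) *)
  (forall alpha, 0 < alpha -> `|alpha / alpha0 - 1| <= r0 ->
     forall w, `| spec_dens theta0 (K alpha nu) w / spec_dens theta0 (K alpha0 nu) w - 1|
               <= L * (`|alpha / alpha0 - 1| `^ kappa)) ->
  (* Assumption A2 (ii) *)
  (forall theta, 0 < theta -> forall w alpha1 alpha2, 0 < alpha1 -> alpha1 <= alpha2 ->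
     spec_dens theta (K alpha2 nu) w <= spec_dens theta (K alpha1 nu) w) ->
  forall n : nat, (N2 < n)%N ->
  forall S : 'I_n -> 'rV[R]_d, injective S ->
  (forall k i, 0 <= S k ord0 i <= 1) ->
  forall alpha, 0 < alpha -> `|alpha / alpha0 - 1| <= n%:R `^ (- (2 / kappa)) ->
  forall lambda : 'I_n -> R,
    char_poly (invmx (cov_mx (K alpha0 nu) S) *m cov_mx (K alpha nu) S)
      = \prod_(k < n) ('X - (lambda k)%:P) ->
    \sum_(k < n) `|lambda k - 1| <= L * n%:R^-1 /\
    \sum_(k < n) `|lambda k - 1| ^+ 2 <= L ^+ 2 * (n%:R ^+ 3)^-1 /\
    \sum_(k < n) `|(lambda k)^-1 - 1| <= 2 * L * n%:R^-1 /\
    \sum_(k < n) `|(lambda k)^-1 - 1| ^+ 2 <= 4 * L ^+ 2 * (n%:R ^+ 3)^-1.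
Proof.
move=> _ alpha0_gt0 Kpd Kint Fint F_ge0 Kinv L_gt0 /andP[r0_gt0 _] kappa_gt0.
have [N2 largeN2] := exists_large_nat L_gt0 r0_gt0 kappa_gt0.
exists N2 => theta0 theta0_gt0 A2i _ n ltN2n S injS _ alpha alpha_gt0 alpha_near.
move=> lambda charE; have [n_r0 e_half] := largeN2 n ltN2n.
have n_gt0 : (0 < n)%N := leq_ltn_trans (leq0n N2) ltN2n.
set e := L * _ in e_half *.
pose F a := spec_dens 1 (K a nu).
have K_cos a : 0 < a -> K a nu = cos_transform (F a).
  by move=> a_gt0; apply/funext => x; rewrite Kinv.
have F_ratio w : (1 - e) * F alpha0 w <= F alpha w <= (1 + e) * F alpha0 w.
  apply: ratio_dist1_sandwich (F_ge0 _ alpha0_gt0 w) _ _; first lra.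
  have := A2i alpha alpha_gt0 (le_trans alpha_near n_r0) w.
  rewrite (spec_densZ _ _ (Kint _ alpha_gt0)) (spec_densZ _ _ (Kint _ alpha0_gt0)).
  rewrite invfM mulrACA mulfV ?gt_eqF // mul1r.
  move/le_trans; apply; rewrite ler_wpM2l ?(ltW L_gt0) //.
  by apply: powR_le_inv_sqr; rewrite ?ltr0n.
have qform_sandwich u :
    (1 - e) * qform (cov_mx (K alpha0 nu) S) u <= qform (cov_mx (K alpha nu) S) u
      <= (1 + e) * qform (cov_mx (K alpha0 nu) S) u.
  have [iF0 iFa] := (Fint _ alpha0_gt0, Fint _ alpha_gt0).
  rewrite (K_cos _ alpha0_gt0) (K_cos _ alpha_gt0) -!qform_cos_transformZ //.
  apply/andP; split; apply: ler_qform_cos_transform => //.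
  - exact: integrableRdZ.
  - by move=> w; case/andP: (F_ratio w).
  - exact: integrableRdZ.
  - by move=> w; case/andP: (F_ratio w).
have lambda_root k :
    root (char_poly (invmx (cov_mx (K alpha0 nu) S) *m cov_mx (K alpha nu) S)) (lambda k).
  by rewrite charE /root horner_prod (bigD1 k) //= hornerXsubC subrr mul0r.
have lambda_near1 k : `|lambda k - 1| <= e :=
  dist1_root_char_invmx_mul (pos_def_fun_qform_gt0 (Kpd _ alpha0_gt0) injS)
    qform_sandwich (lambda_root k).
exact: sum_dist1_le.
Qed.
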